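(* Let $M$ be a matroid, let $S,T$ be disjoint subsets of $E(M)$, let $k:=\kappa_M(S,T)$, and let $(A_1,\dots,A_t)$ be a sequence of sets with $A_1\subseteq A_2\subseteq\dots\subseteq A_t$, $S\subseteq A_i\subseteq E(M)-T$ and $\lambda_M(A_i)=k$ for all $i$; put $B_i:=E(M)-A_i$. Let $(C,D)$ be a partition of $E(M)-(S\cup T)$ such that $C$ is independent, $D$ is coindependent, and $\lambda_{M/C\setminus D}(S)=k$. Let $i,j\in\{1,\dots,t\}$ with $i<j$, let $C':=C\cap(A_j-A_i)$, $D':=D\cap(A_j-A_i)$, and $M':=M/C'\setminus D'$. Then $(A_i,B_j)$ is a partition of $E(M')$ with $S\subseteq A_i$, $T\subseteq B_j$ and $\lambda_{M'}(A_i)=k$. Moreover, $M'|A_i=M|A_i$ and $M'|B_j=M|B_j$.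
   Context: For a matroid $M$ with ground set $E$, $\lambda_M(X):=r_M(X)+r_M(E-X)-r(M)$, and for disjoint $S,T\subseteq E$, $\kappa_M(S,T):=\min\{\lambda_M(X):S\subseteq X\subseteq E-T\}$. $M|X$ denotes the restriction of $M$ to $X$. *)

From mathcomp Require Import all_boot.
Set Implicit Arguments. Unset Strict Implicit. Unset Printing Implicit Defensive.

Section Matroids.
Variable T : finType.

(* A (raw) matroid: a finite ground set E and a rank function.  Only the
   values of the rank on subsets of E are meaningful. *)
Record matroid := Matroid { ground : {set T}; rank : {set T} -> nat }.

Definition is_matroid (M : matroid) : Prop :=
  [/\ forall X : {set T}, X \subset ground M -> rank M X <= #|X|,
      forall X Y : {set T}, X \subset Y -> Y \subset ground M -> rank M X <= rank M Y
    & forall X Y : {set T}, X \subset ground M -> Y \subset ground M ->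
        rank M (X :|: Y) + rank M (X :&: Y) <= rank M X + rank M Y].

Definition lambda (M : matroid) (X : {set T}) : nat :=
  rank M X + rank M (ground M :\: X) - rank M (ground M).

Definition kappa (M : matroid) (S U : {set T}) : nat :=
  \big[minn/lambda M S]_(X : {set T} | (S \subset X) && (X \subset ground M :\: U))
     lambda M X.

Definition minor (M : matroid) (C D : {set T}) : matroid :=
  Matroid (ground M :\: (C :|: D)) (fun X => rank M (X :|: C) - rank M C).

Definition restrict (M : matroid) (X : {set T}) : matroid :=
  Matroid X (fun Y => rank M (Y :&: X)).

Definition independent (M : matroid) (C : {set T}) : Prop :=
  C \subset ground M /\ rank M C = #|C|.

Definition coindependent (M : matroid) (D : {set T}) : Prop :=
  D \subset ground M /\ rank M (ground M :\: D) = rank M (ground M).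

End Matroids.

From mathcomp Require Import all_boot zify.
From Stdlib Require Import FunctionalExtensionality.

Set Implicit Arguments. Unset Strict Implicit. Unset Printing Implicit Defensive.

(* Submodularity together with lambda_{M/C\D}(S) = k gives
   r(A_i u C') + r(B_j u C') >= k + r(M) + r(C').  As A_i u C' <= A_j,
   B_j u C' <= E - A_i and lambda(A_i) = lambda(A_j) = k, this forces C' to be
   skew to both sides: r(A_i u C') = r(A_i) + r(C'), and likewise for B_j.
   Skewness yields the two restriction identities, and, since r(E - D') = r(M)
   by coindependence of D, also lambda_{M'}(A_i) = k. *)

Ltac set_cases x :=
  repeat match goal with
  | H : is_true (_ \subset _) |- _ => move: (subsetP H x) => /implyP; clear H
  | H : is_true [disjoint _ & _] |- _ =>
      move: (H); rewrite -setI_eq0 => /eqP/setP/(_ x); clear H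
  | H : @eq {set _} _ _ |- _ => move/setP: (H) => /(_ x); clear H
  end;
  rewrite /= ?inE; do ?case: (x \in _); by [].

Ltac setdec :=
  let x := fresh "x" in
  first [ rewrite -setI_eq0; apply/eqP/setP => x
        | apply/setP => x
        | apply/subsetP => x ];
  set_cases x.

Section Rank.
Variables (T : finType) (M : matroid T).
Implicit Types X Y Z V I C D P Q : {set T}.
Hypothesis HM : is_matroid M.
Local Notation E := (ground M).
Local Notation r := (rank M).

Lemma rankS X Y : X \subset Y -> Y \subset E -> r X <= r Y.
Proof. by case: HM => _ mono _; apply: mono. Qed.

Lemma rank_submod X Y V I : X :|: Y = V -> X :&: Y = I ->
  X \subset E -> Y \subset E -> r V + r I <= r X + r Y.
Proof. by case: HM => _ _ submod <- <-; apply: submod. Qed.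

Lemma rankU_le X Y : X \subset E -> Y \subset E -> r (X :|: Y) <= r X + r Y.
Proof. by move=> sXE sYE; have := rank_submod erefl (erefl (X :&: Y)) sXE sYE; lia. Qed.

Lemma lambdaE X : X \subset E -> lambda M X + r E = r X + r (E :\: X).
Proof.
move=> sXE; have : r E + r set0 <= r X + r (E :\: X) by apply: rank_submod; setdec.
by rewrite /lambda; lia.
Qed.

Lemma lambda_minorE C D X : C \subset E -> [disjoint C & D] ->
    X \subset ground (minor M C D) ->
  lambda (minor M C D) X + r C + r (E :\: D)
    = r (X :|: C) + r (ground (minor M C D) :\: X :|: C).
Proof.
move=> sCE dCD sXE'.
have eEC : ground (minor M C D) :|: C = E :\: D by setdec.
have : r C <= r (X :|: C) by apply: rankS; setdec.
have : r C <= r (ground (minor M C D) :\: X :|: C) by apply: rankS; setdec.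
have : r C <= r (E :\: D) by apply: rankS; setdec.
have : r (E :\: D) + r C <= r (X :|: C) + r (ground (minor M C D) :\: X :|: C).
  by apply: rank_submod; setdec.
by rewrite /lambda /= eEC; lia.
Qed.

Lemma rank_skewS X Y Z : Y \subset X -> X \subset E -> Z \subset E ->
  r (X :|: Z) = r X + r Z -> r (Y :|: Z) = r Y + r Z.
Proof.
move=> sYX sXE sZE skewX.
have : r (X :|: Z) + r (Y :|: Z :&: X) <= r (Y :|: Z) + r X by apply: rank_submod; setdec.
have : r Y <= r (Y :|: Z :&: X) by apply: rankS; setdec.
have : r (Y :|: Z) <= r Y + r Z by apply: rankU_le; setdec.
by lia.
Qed.

Lemma restrict_minor_skew X Z D : X \subset E -> Z \subset E ->
  r (X :|: Z) = r X + r Z -> restrict (minor M Z D) X = restrict M X.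
Proof.
move=> sXE sZE skew; congr Matroid; apply: functional_extensionality => Y /=.
by rewrite (rank_skewS (subsetIr Y X)) // addnK.
Qed.

(* The local connectivity of P and Q after contracting C is at most that
   after contracting a subset Z of C. *)
Lemma rank_contract_pair_le P Q Z C :
    P \subset E -> Q \subset E -> [disjoint P & Q] ->
    Z \subset C -> C \subset E -> C \subset P :|: Q :|: Z ->
  r (P :|: C) + r (Q :|: C) + r Z <= r (P :|: Z) + r (Q :|: Z) + r C.
Proof.
move=> sPE sQE dPQ sZC sCE sCPQZ.
have : r (P :|: C) + r (Z :|: C :&: P) <= r (P :|: Z) + r C by apply: rank_submod; setdec.
have : r (Q :|: C) + r (Z :|: C :&: Q) <= r (Q :|: Z) + r C by apply: rank_submod; setdec.
have : r C + r Z <= r (Z :|: C :&: P) + r (Z :|: C :&: Q) by apply: rank_submod; setdec.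
by lia.
Qed.

End Rank.

Section MinorBetweenSides.
Variables (T : finType) (M : matroid T) (S U Ai Aj C D : {set T}) (k : nat).
Hypotheses (HM : is_matroid M) (sUE : U \subset ground M)
  (sSAi : S \subset Ai) (sAij : Ai \subset Aj) (sAjE : Aj \subset ground M :\: U)
  (eCD : C :|: D = ground M :\: (S :|: U)) (dCD : [disjoint C & D])
  (coD : rank M (ground M :\: D) = rank M (ground M))
  (lamAi : lambda M Ai = k) (lamAj : lambda M Aj = k)
  (lamN : lambda (minor M C D) S = k).

Local Notation E := (ground M).
Local Notation r := (rank M).
Local Notation Bj := (E :\: Aj).
Local Notation C' := (C :&: (Aj :\: Ai)).
Local Notation D' := (D :&: (Aj :\: Ai)).
Local Notation M' := (minor M C' D').

Lemma rank_sides_lower : k + r E + r C' <= r (Ai :|: C') + r (Bj :|: C').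
Proof.
have eUC : ground (minor M C D) :\: S :|: C = U :|: C by setdec.
have := @lambda_minorE _ _ HM C D S; rewrite lamN coD eUC => lamSC.
have : k + r C + r E = r (S :|: C) + r (U :|: C) by apply: lamSC; setdec.
have : r (S :|: C) <= r (Ai :|: C) by apply: (rankS HM); setdec.
have : r (U :|: C) <= r (Bj :|: C) by apply: (rankS HM); setdec.
have : r (Ai :|: C) + r (Bj :|: C) + r C' <= r (Ai :|: C') + r (Bj :|: C') + r C.
  by apply: (rank_contract_pair_le HM); setdec.
by lia.
Qed.

Lemma rank_sides_skew : r (Ai :|: C') = r Ai + r C' /\ r (Bj :|: C') = r Bj + r C'.
Proof.
have := rank_sides_lower.
have : k + r E = r Ai + r (E :\: Ai) by rewrite -lamAi (lambdaE HM) //; setdec.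
have : k + r E = r Aj + r Bj by rewrite -lamAj (lambdaE HM) //; setdec.
have : r (Ai :|: C') <= r Aj by apply: (rankS HM); setdec.
have : r (Bj :|: C') <= r (E :\: Ai) by apply: (rankS HM); setdec.
have : r (Ai :|: C') <= r Ai + r C' by apply: (rankU_le HM); setdec.
have : r (Bj :|: C') <= r Bj + r C' by apply: (rankU_le HM); setdec.
by lia.
Qed.

Lemma sides_partition : Ai :|: Bj = ground M' /\ [disjoint Ai & Bj].
Proof. by split; setdec. Qed.

Lemma lambda_minor_sides : lambda M' Ai = k.
Proof.
have eBC : ground M' :\: Ai :|: C' = Bj :|: C' by setdec.
have := @lambda_minorE _ _ HM C' D' Ai; rewrite eBC => lamM'.
have : lambda M' Ai + r C' + r (E :\: D') = r (Ai :|: C') + r (Bj :|: C').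
  by apply: lamM'; setdec.
have : r (E :\: D) <= r (E :\: D') by apply: (rankS HM); setdec.
have : r (E :\: D') <= r E by apply: (rankS HM); setdec.
have : k + r E = r Aj + r Bj by rewrite -lamAj (lambdaE HM) //; setdec.
have : r (Ai :|: C') <= r Aj by apply: (rankS HM); setdec.
have := rank_sides_lower; have := rank_sides_skew.
by lia.
Qed.

Lemma restrict_minor_Ai : restrict M' Ai = restrict M Ai.
Proof. by apply: (restrict_minor_skew HM); [setdec | setdec | case: rank_sides_skew]. Qed.

Lemma restrict_minor_Bj : restrict M' Bj = restrict M Bj.
Proof. by apply: (restrict_minor_skew HM); [setdec | setdec | case: rank_sides_skew]. Qed.

End MinorBetweenSides.

Theorem lemma3p7 (T : finType) (M : matroid T) (S U : {set T})
  (t : nat) (A : 'I_t -> {set T}) (C D : {set T}) (i j : 'I_t) :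
  is_matroid M ->
  S \subset ground M -> U \subset ground M -> [disjoint S & U] ->
  (forall a b : 'I_t, a <= b -> A a \subset A b) ->
  (forall a : 'I_t, S \subset A a /\ A a \subset ground M :\: U) ->
  (forall a : 'I_t, lambda M (A a) = kappa M S U) ->
  C :|: D = ground M :\: (S :|: U) -> [disjoint C & D] ->
  independent M C -> coindependent M D ->
  lambda (minor M C D) S = kappa M S U ->
  i < j ->
  let B := fun a : 'I_t => ground M :\: A a in
  let M' := minor M (C :&: (A j :\: A i)) (D :&: (A j :\: A i)) in
  [/\ A i :|: B j = ground M' /\ [disjoint A i & B j],
      S \subset A i /\ U \subset B j,
      lambda M' (A i) = kappa M S U,
      restrict M' (A i) = restrict M (A i)
    & restrict M' (B j) = restrict M (B j)].
Proof.
move=> HM _ sUE _ monoA sideA lamA eCD dCD _ [_ coD] lamN ltij B M'.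
rewrite {}/B {}/M'.
have [sSAi _] := sideA i; have [_ sAjE] := sideA j.
have sAij := monoA i j (ltnW ltij).
have lamAi := lamA i; have lamAj := lamA j.
split.
- by apply: (sides_partition (S := S) (U := U)).
- by split=> //; setdec.
- by apply: (lambda_minor_sides (S := S) (U := U)).
- by apply: (restrict_minor_Ai (S := S) (U := U)).
- by apply: (restrict_minor_Bj (S := S) (U := U)).
Qed.
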